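(* Let $f\in\mathcal{F}_k$. For every $p\in\Delta_\mathcal{Y}$, with $U=\arg\min_{u'\in\mathbb{R}^k}\sum_yp_yL^f(u',y)$, every $u\in\mathbb{R}^k$ and every $0<\epsilon<2$: if $d_\infty(U,u)<\epsilon$ then $d_\infty(U\cap[-1,1]^k,\boxed{u})<\epsilon$.
   Context: $[k]=\{1,\dots,k\}$, $\mathcal{Y}=\{-1,1\}^k$, $\Delta_\mathcal{Y}$ the distributions on $\mathcal{Y}$; $u\odot u'$ entrywise product, $|u|$ entrywise absolute value, $\mathbbm{1}$ all-ones, $(x)_+$ entrywise positive part; $\boxed{u}=\mathrm{sign}(u)\odot\min(|u|,\mathbbm{1})$. For $A\subseteq\mathbb{R}^k$, $d_\infty(A,u)=\inf_{a\in A}\|a-u\|_\infty$. $\mathcal{F}_k$: submodular, increasing, normalized set functions $f:2^{[k]}\to\mathbb{R}$. Lovász extension $F(x)=\max_\pi\sum_{i=1}^kx_{\pi_i}(f(\{\pi_1,..,\pi_i\})-f(\{\pi_1,..,\pi_{i-1}\}))$; Lovász hinge $L^f(u,y)=F((\mathbbm{1}-u\odot y)_+)$. *)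

From HB Require Import structures.
From mathcomp Require Import all_boot all_order all_algebra all_fingroup.
From mathcomp Require Import classical_sets reals constructive_ereal ereal.
Set Implicit Arguments. Unset Strict Implicit. Unset Printing Implicit Defensive.
Import Order.TTheory GRing.Theory Num.Theory.
Local Open Scope ring_scope.

Section LovaszDefs.
Variable R : realType.

(* vectors of R^k are functions 'I_k -> R;  Y = {-1,1}^k encoded by
   {ffun 'I_k -> bool}, with true |-> 1 and false |-> -1 *)
Definition lab (k : nat) := {ffun 'I_k -> bool}.
Definition labv (k : nat) (y : lab k) : 'I_k -> R :=
  fun i => if y i then 1 else -1.

Definition is_distr (k : nat) (p : {ffun lab k -> R}) : Prop :=
  (forall y, 0 <= p y) /\ \sum_(y : lab k) p y = 1.

Definition submodular (k : nat) (f : {set 'I_k} -> R) : Prop :=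
  forall A B : {set 'I_k}, f (A :|: B) + f (A :&: B) <= f A + f B.
Definition increasing_setfun (k : nat) (f : {set 'I_k} -> R) : Prop :=
  forall A B : {set 'I_k}, A \subset B -> f A <= f B.
Definition normalized (k : nat) (f : {set 'I_k} -> R) : Prop := f finset.set0 = 0.
Definition in_Fk (k : nat) (f : {set 'I_k} -> R) : Prop :=
  [/\ submodular f, increasing_setfun f & normalized f].

Definition lovasz_term (k : nat) (f : {set 'I_k} -> R) (x : 'I_k -> R)
  (s : {perm 'I_k}) : R :=
  \sum_(i : 'I_k) x (s i) *
     (f [set s j | j in [pred j : 'I_k | (j <= i)%N]]
      - f [set s j | j in [pred j : 'I_k | (j < i)%N]]).
Definition lovasz (k : nat) (f : {set 'I_k} -> R) (x : 'I_k -> R) : R :=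
  \big[Num.max/lovasz_term f x 1%g]_(s : {perm 'I_k}) lovasz_term f x s.

Definition lovasz_hinge (k : nat) (f : {set 'I_k} -> R) (u : 'I_k -> R)
  (y : lab k) : R :=
  lovasz f (fun i => Num.max 0 (1 - u i * labv y i)).

Definition exp_loss (k : nat) (f : {set 'I_k} -> R) (p : {ffun lab k -> R})
  (u : 'I_k -> R) : R := \sum_(y : lab k) p y * lovasz_hinge f u y.
Definition argmin_set (k : nat) (f : {set 'I_k} -> R) (p : {ffun lab k -> R})
  : set ('I_k -> R) :=
  [set u | forall u' : 'I_k -> R, exp_loss f p u <= exp_loss f p u'].

Definition boxed (k : nat) (u : 'I_k -> R) : 'I_k -> R :=
  fun i => Num.sg (u i) * Num.min `|u i| 1.

Definition cube (k : nat) : set ('I_k -> R) :=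
  [set a | forall i, -1 <= a i <= 1].

(* sup norm and d_infty(A,u) = inf_{a in A} ||a - u||_infty (in \bar R,
   = +oo when A is empty) *)
Definition sup_norm (k : nat) (v : 'I_k -> R) : R :=
  \big[Num.max/0]_(i : 'I_k) `|v i|.
Definition d_inf (k : nat) (A : set ('I_k -> R)) (u : 'I_k -> R) : \bar R :=
  ereal_inf [set (sup_norm (fun i => a i - u i))%:E | a in A].

End LovaszDefs.

(** Clamping every coordinate to [[-1, 1]] never increases a hinge term
    [(1 - u_i y_i)_+] with [y_i = ±1], and the Lovász extension of an
    increasing set function is monotone; so the clamp of a minimizer of the
    expected Lovász hinge is again a minimizer, now inside the cube.  Since
    clamping is 1-Lipschitz in each coordinate, the clamp of a minimizer
    [a] is at least as close to [boxed u] as [a] is to [u]. *)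

From HB Require Import structures.
From mathcomp Require Import all_boot all_order all_algebra all_fingroup.
From mathcomp Require Import classical_sets reals constructive_ereal ereal.
From mathcomp Require Import lra.
Set Implicit Arguments. Unset Strict Implicit. Unset Printing Implicit Defensive.
Import Order.TTheory GRing.Theory Num.Theory.
Local Open Scope ring_scope.
Local Open Scope classical_set_scope.

Ltac case_minmax_lra :=
  repeat match goal with
  | |- context[Order.min ?a ?b] => have [?|?] := lerP a b
  | |- context[Order.max ?a ?b] => have [?|?] := lerP a b
  end; lra.

Section Clamp.
Variable R : realType.

Definition clamp (x : R) : R := Num.max (-1) (Num.min x 1).

Lemma clamp_bound (x : R) : -1 <= clamp x <= 1.
Proof. by apply/andP; split; rewrite /clamp; case_minmax_lra. Qed.

Lemma clamp_lipschitz (x y : R) : `|clamp x - clamp y| <= `|x - y|.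
Proof.
rewrite /clamp; have [|] := lerP x y => ?;
  by rewrite ler_norml; apply/andP; split; case_minmax_lra.
Qed.

Lemma hinge_clamp_le (x : R) (b : bool) :
  Num.max 0 (1 - clamp x * (if b then 1 else -1)) <=
  Num.max 0 (1 - x * (if b then 1 else -1)).
Proof. by rewrite /clamp; case: b; rewrite ?mulr1 ?mulrN1; case_minmax_lra. Qed.

Lemma boxedE (k : nat) (u : 'I_k -> R) (i : 'I_k) : boxed u i = clamp (u i).
Proof.
rewrite /boxed /clamp; have [ui_lt0|ui_gt0|->] := ltrgtP (u i) 0.
- by rewrite ltr0_sg // ltr0_norm //; case_minmax_lra.
- by rewrite gtr0_sg // gtr0_norm //; case_minmax_lra.
- by rewrite sgr0 mul0r; case_minmax_lra.
Qed.

End Clamp.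

Section LovaszMonotone.
Variables (R : realType) (k : nat) (f : {set 'I_k} -> R).
Hypothesis f_incr : increasing_setfun f.

Lemma lovasz_term_le (x x' : 'I_k -> R) (s : {perm 'I_k}) :
  (forall i, x i <= x' i) -> lovasz_term f x s <= lovasz_term f x' s.
Proof.
move=> le_xx'; apply: ler_sum => i _; apply: ler_wpM2r; last exact: le_xx'.
rewrite subr_ge0; apply/f_incr/imsetS/fintype.subsetP => j.
by rewrite !inE; apply: ltnW.
Qed.

Lemma lovasz_le (x x' : 'I_k -> R) :
  (forall i, x i <= x' i) -> lovasz f x <= lovasz f x'.
Proof.
move=> le_xx'; have term_le s : lovasz_term f x s <= lovasz f x'.
  exact: le_trans (lovasz_term_le s le_xx') (le_bigmax _ _ s).
by apply: bigmax_le => // s _.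
Qed.

Variable p : {ffun lab k -> R}.
Hypothesis p_ge0 : forall y, 0 <= p y.

Lemma exp_loss_boxed_le (a : 'I_k -> R) :
  exp_loss f p (boxed a) <= exp_loss f p a.
Proof.
apply: ler_sum => y _; apply: ler_wpM2l => //.
by apply: lovasz_le => i; rewrite boxedE; apply: hinge_clamp_le.
Qed.

Lemma boxed_argmin_cube (a : 'I_k -> R) :
  argmin_set f p a -> (argmin_set f p `&` @cube R k) (boxed a).
Proof.
move=> a_min; split=> [u'|i]; last by rewrite boxedE clamp_bound.
exact: le_trans (exp_loss_boxed_le a) (a_min u').
Qed.

End LovaszMonotone.

Lemma sup_norm_boxed_le (R : realType) (k : nat) (a u : 'I_k -> R) :
  sup_norm (fun i => boxed a i - boxed u i) <= sup_norm (fun i => a i - u i).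
Proof. by apply: le_bigmax2 => i _; rewrite !boxedE clamp_lipschitz. Qed.

Theorem lemma10 (R : realType) (k : nat) (f : {set 'I_k} -> R)
  (hf : in_Fk f) (p : {ffun lab k -> R}) (hp : is_distr p)
  (u : 'I_k -> R) (eps : R) (heps0 : 0 < eps) (heps2 : eps < 2) :
  (d_inf (argmin_set f p) u < eps%:E)%E ->
  (d_inf (argmin_set f p `&` @cube R k) (boxed u) < eps%:E)%E.
Proof.
move=> /ereal_inf_lt [_ [a a_min <-]] dist_lt.
have [_ f_incr _] := hf; have [p_ge0 _] := hp.
have boxed_closer : ((sup_norm (fun i => boxed a i - boxed u i))%:E <=
                     (sup_norm (fun i => a i - u i))%:E)%E.
  by rewrite lee_fin sup_norm_boxed_le.
apply: le_lt_trans (le_trans _ boxed_closer) dist_lt.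
by apply: ereal_inf_lbound; exists (boxed a) => //; apply: boxed_argmin_cube.
Qed.
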